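(* For every $n\geq 1$ there exists a generalized NFA $M$ over a binary alphabet with $n$ states, each of which is both initial and final, such that the minimal (complete) DFA accepting $L(M)$ has $2^n$ states.
   Context: A generalized NFA is a quintuple $M=(Q,\Sigma,\delta,I,F)$ with finite state set $Q$, transition function $\delta: Q\times\Sigma\to 2^Q$, a set of initial states $I\subseteq Q$ and final states $F\subseteq Q$; it accepts $w$ iff $\delta(I,w)\cap F\neq\emptyset$. DFAs are required to be complete; the minimal DFA of a regular language is the complete DFA with fewest states accepting it. *)

From mathcomp Require Import all_boot.
Set Implicit Arguments. Unset Strict Implicit. Unset Printing Implicit Defensive.

Record gnfa (A : Type) (Q : finType) := GNFA {
  gnfa_delta : Q -> A -> {set Q};
  gnfa_init  : {set Q};
  gnfa_final : {set Q} }.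

Definition gnfa_step A Q (M : gnfa A Q) (S : {set Q}) (a : A) : {set Q} :=
  \bigcup_(q in S) gnfa_delta M q a.
Definition gnfa_run A Q (M : gnfa A Q) (S : {set Q}) (w : seq A) : {set Q} :=
  foldl (gnfa_step M) S w.
Definition gnfa_accepts A Q (M : gnfa A Q) (w : seq A) : bool :=
  gnfa_run M (gnfa_init M) w :&: gnfa_final M != set0.

Record dfa (A : Type) (Q : finType) := DFA {
  dfa_delta : Q -> A -> Q;
  dfa_start : Q;
  dfa_final : {set Q} }.
Definition dfa_run A Q (D : dfa A Q) (q : Q) (w : seq A) : Q :=
  foldl (dfa_delta D) q w.
Definition dfa_accepts A Q (D : dfa A Q) (w : seq A) : bool :=
  dfa_run D (dfa_start D) w \in dfa_final D.

Definition minimal_dfa_size (A : Type) (L : seq A -> bool) (k : nat) : Prop :=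
  (exists D : dfa A 'I_k, forall w, dfa_accepts D w = L w) /\
  (forall (m : nat) (D : dfa A 'I_m), (forall w, dfa_accepts D w = L w) -> k <= m).

From mathcomp Require Import all_boot.

(* The witness has states 0, ..., n-1 arranged in a cycle: letter [true] moves
   every state one step along the cycle, letter [false] fixes every state except
   0, which it kills.  Rotating j to 0, applying [false] and rotating once more
   around the cycle removes exactly j from any set of states, so starting from
   the full set every subset S is reachable; and S is separated from every other
   subset by the words reaching the singletons {i}.  Hence the subset
   construction, with its 2^n states, is already minimal. *)

Lemma card_set (T : finType) : #|{set T}| = 2 ^ #|T|.
Proof. by have := card_powerset [set: T]; rewrite powersetT !cardsT. Qed.

Lemma gnfa_run_cat A Q (M : gnfa A Q) X u v :
  gnfa_run M X (u ++ v) = gnfa_run M (gnfa_run M X u) v.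
Proof. exact: foldl_cat. Qed.

Lemma dfa_run_cat A Q (D : dfa A Q) q u v :
  dfa_run D q (u ++ v) = dfa_run D (dfa_run D q u) v.
Proof. exact: foldl_cat. Qed.

Lemma gnfa_subset_dfa {A : Type} {Q : finType} (M : gnfa A Q) :
  exists D : dfa A 'I_(2 ^ #|Q|), forall w, dfa_accepts D w = gnfa_accepts M w.
Proof.
have cardQ := card_set Q.
pose to (S : {set Q}) := cast_ord cardQ (enum_rank S).
pose from (i : 'I_(2 ^ #|Q|)) := enum_val (cast_ord (esym cardQ) i).
have toK : cancel to from by move=> S; rewrite /from /to cast_ordK enum_rankK.
pose D := DFA (fun i a => to (gnfa_step M (from i) a)) (to (gnfa_init M))
              [set i | from i :&: gnfa_final M != set0].
exists D => w.
have run X : dfa_run D (to X) w = to (gnfa_run M X w).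
  by rewrite /dfa_run /gnfa_run; elim: w X => [|a w IH] X //=; rewrite toK IH.
by rewrite /dfa_accepts /= run inE toK.
Qed.

Lemma dfa_card_ge_separated {A : Type} (L : seq A -> bool) {T : finType} (f : T -> seq A) :
  (forall x y, (forall v, L (f x ++ v) = L (f y ++ v)) -> x = y) ->
  forall m (D : dfa A 'I_m), (forall w, dfa_accepts D w = L w) -> #|T| <= m.
Proof.
move=> separated m D DL.
pose g x := dfa_run D (dfa_start D) (f x).
have /leq_card : injective g.
  move=> x y gxy; apply: separated => v.
  by rewrite -!DL /dfa_accepts !dfa_run_cat -/(g x) -/(g y) gxy.
by rewrite card_ord.
Qed.

Section CycleKill.

Variable n : nat.

Definition cycle_kill_gnfa : gnfa bool 'I_n :=
  GNFA (fun q (c : bool) => if c then [set ordS q]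
                            else if val q == 0 then set0 else [set q])
       setT setT.

Local Notation M := cycle_kill_gnfa.

Lemma val_iter_ordS k (x : 'I_n) : val (iter k (@ordS n) x) = (x + k) %% n.
Proof.
elim: k => [|k IH] /=; first by rewrite addn0 modn_small.
by rewrite IH -addn1 modnDml addn1 addnS.
Qed.

Lemma iter_ordS_n (x : 'I_n) : iter n (@ordS n) x = x.
Proof. by apply: val_inj; rewrite val_iter_ordS modnDr modn_small. Qed.

Lemma cycle_kill_step_true X : gnfa_step M X true = @ordS n @: X.
Proof.
apply/setP=> y; apply/bigcupP/imsetP => [[q qX /set1P ->]|[q qX ->]].
  by exists q.
by exists q; rewrite ?inE.
Qed.

Lemma cycle_kill_step_false X :
  gnfa_step M X false = X :\: [set x | val x == 0].
Proof.
rewrite /gnfa_step /=; apply/setP=> y; rewrite !inE.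
apply/bigcupP/idP => [[q qX]|/andP[y0 yX]].
  case: ifP => [_|/negbT q0]; first by rewrite inE.
  by move/set1P ->; rewrite q0 qX.
by exists y; rewrite // (negbTE y0) inE.
Qed.

Lemma cycle_kill_run_rotate k X :
  gnfa_run M X (nseq k true) = iter k (@ordS n) @: X.
Proof.
elim: k X => [|k IH] X /=; first by rewrite imset_id.
by rewrite cycle_kill_step_true IH -imset_comp; apply: eq_imset => x; rewrite /= -iterSr.
Qed.

Definition kill_word (j : 'I_n) : seq bool :=
  nseq (n - j) true ++ false :: nseq j true.

Lemma cycle_kill_run_kill_word X j : gnfa_run M X (kill_word j) = X :\ j.
Proof.
have rot_nK x : iter j (@ordS n) (iter (n - j) (@ordS n) x) = x.
  by rewrite -iterD subnKC ?iter_ordS_n // ltnW.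
have rot_j0 y : (val (iter (n - j) (@ordS n) y) == 0) = (y == j).
  have jn0 : (j + (n - j)) %% n = 0 by rewrite subnKC ?modnn // ltnW.
  by rewrite val_iter_ordS -jn0 eqn_modDr !modn_small.
rewrite gnfa_run_cat cycle_kill_run_rotate /= cycle_kill_step_false.
rewrite cycle_kill_run_rotate; apply/setP=> y; rewrite !inE.
apply/imsetP/andP => [[_ /setDP[/imsetP[x xX ->]]]|[yj yX]].
  by rewrite inE rot_j0 rot_nK => xj ->.
exists (iter (n - j) (@ordS n) y); last by rewrite rot_nK.
by rewrite !inE rot_j0 yj imset_f.
Qed.

Definition restrict_word (S : {set 'I_n}) : seq bool :=
  flatten (map kill_word (enum (~: S))).

Lemma cycle_kill_run_restrict_word X S :
  gnfa_run M X (restrict_word S) = X :&: S.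
Proof.
have -> : X :&: S = X :\: [set x in enum (~: S)].
  by apply/setP=> y; rewrite !inE mem_enum !inE negbK andbC.
rewrite /restrict_word; elim: (enum _) X => [|j s IH] X /=.
  by apply/setP=> y; rewrite !inE in_nil.
rewrite gnfa_run_cat cycle_kill_run_kill_word IH.
by apply/setP=> y; rewrite !inE negb_or -andbA [RHS]andbCA.
Qed.

Lemma cycle_kill_accepts_restrict S i :
  gnfa_accepts M (restrict_word S ++ restrict_word [set i]) = (i \in S).
Proof.
rewrite /gnfa_accepts gnfa_run_cat !cycle_kill_run_restrict_word /= setIT setTI.
apply/set0Pn/idP => [[y]|iS]; first by rewrite !inE => /andP[yS /eqP <-].
by exists i; rewrite !inE eqxx andbT.
Qed.

End CycleKill.

Theorem mainTheorem12 :
  forall n : nat, 1 <= n ->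
  exists M : gnfa bool 'I_n,
    gnfa_init M = [set: 'I_n] /\ gnfa_final M = [set: 'I_n] /\
    minimal_dfa_size (gnfa_accepts M) (2 ^ n).
Proof.
move=> n _; exists (cycle_kill_gnfa n); do 3!split => //.
  by have := gnfa_subset_dfa (cycle_kill_gnfa n); rewrite card_ord.
move=> m D DL; rewrite -[n]card_ord -card_set.
apply: (dfa_card_ge_separated _ (@restrict_word n)) DL => S T sameST.
by apply/setP=> i; rewrite -!cycle_kill_accepts_restrict sameST.
Qed.
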